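(* Let $(M,d,\mu,\mathcal{E},\mathcal{F})$ be a metric measure Dirichlet space (as in the context) with diffusion $(X_t,P^x)$, and let $\epsilon>0$. For every $x\in M$, $P^x$-almost surely the map $t\mapsto V_\epsilon(t)$ is continuous.
   Context: Standing framework: $(M,d)$ non-compact, connected, complete, separable metric space with relatively compact open balls $B(x,r)=\{y:d(x,y)<r\}$; $\mu$ a Borel measure with $0<\mu(U)\le\mu(\overline U)<\infty$ for relatively compact open $U$; for every $x\in M$, $r\ge0$ the sphere $\{y:d(x,y)=r\}$ is nonempty and has $\mu$-measure zero; $(\mathcal{E},\mathcal{F})$ a strongly local, regular, symmetric, conservative Dirichlet form on $L^2(M,\mu)$ whose associated Hunt process $(X_t,P^x)$ (a diffusion, i.e. with continuous paths) has a jointly continuous heat kernel. $V_\epsilon(t)=\mu(\bigcup_{s\in[0,t]}B(X_s,\epsilon))$. *)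

From HB Require Import structures.
From mathcomp Require Import all_boot all_order all_algebra.
From mathcomp Require Import all_classical all_reals all_analysis.
Set Implicit Arguments. Unset Strict Implicit. Unset Printing Implicit Defensive.
Import Order.TTheory GRing.Theory Num.Theory.
Local Open Scope classical_set_scope.
Local Open Scope ring_scope.

Definition mball {R : realType} {M : metricType R} (x : M) (r : R) : set M :=
  [set y | mdist x y < r].

Definition msphere {R : realType} {M : metricType R} (x : M) (r : R) : set M :=
  [set y | mdist x y = r].

(* MathComp-Analysis has no pointed metric structure, and the generated
   sigma-algebra instance needs a pointed carrier; we therefore attach an
   (irrelevant) base point m0 to a copy of M.  The sigma-algebra itself does
   not depend on m0. *)
Definition pointed_copy {R : realType} {M : metricType R} (m0 : M) : Type := M.
HB.instance Definition _ {R : realType} {M : metricType R} (m0 : M) :=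
  Choice.on (pointed_copy m0).
HB.instance Definition _ {R : realType} {M : metricType R} (m0 : M) :=
  isPointed.Build (pointed_copy m0) m0.
Definition borel {R : realType} {M : metricType R} (m0 : M) :=
  @g_sigma_algebraType (pointed_copy m0) (@open M).

Definition complete_metric {R : realType} (M : metricType R) : Prop :=
  forall F : set_system M, ProperFilter F -> cauchy F -> exists l : M, F --> l.

Definition separable_space {R : realType} (M : metricType R) : Prop :=
  exists D : set M, countable D /\ closure D = setT.

Definition relatively_compact {R : realType} {M : metricType R} (U : set M) : Prop :=
  compact (closure U).

Definition Veps {R : realType} {M : metricType R} {Omega : Type} {m0 : M}
  (mu : {measure set (borel m0) -> \bar R}) (X : R -> Omega -> M)
  (eps : R) (w : Omega) (t : R) : \bar R :=
  mu (\bigcup_(s in `[0, t]) mball (X s w) eps).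

(* Along a path g that is continuous on [0, +oo[, V_eps(t) = mu (tube t), where
   tube t is the union of the eps-balls around the g s, s in [0, t], is
   nondecreasing in t, so it suffices to approximate it from each side.
   Continuity of g at t makes tube t the increasing union of the tube (t - h),
   h > 0, hence left continuity by continuity of mu from below.  On the right,
   tube (t + h) lies in tube t plus the shell of points eps-close to g([t, t + h])
   but not to g t; these shells lie in a ball of finite measure and shrink, as
   h -> 0, into the sphere of radius eps about g t, which is mu-null, hence right
   continuity by continuity of mu from above. *)

From HB Require Import structures.
From mathcomp Require Import all_boot all_order all_algebra.
From mathcomp Require Import all_classical all_reals all_analysis.
From mathcomp Require Import lra.
Import numFieldTopology.Exports.
Import Order.TTheory GRing.Theory Num.Theory.
Set Implicit Arguments. Unset Strict Implicit. Unset Printing Implicit Defensive.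
Local Open Scope classical_set_scope.
Local Open Scope ring_scope.

Section metric_balls.
Context {R : realType} {M : metricType R}.
Implicit Types (x : M) (r : R).

Lemma open_mball x r : open (mball x r).
Proof.
rewrite openE => y xy; apply/nbhs_ballP; exists (r - mdist x y) => /=.
  by rewrite subr_gt0.
move=> z; rewrite ballEmdist /= => yz.
have := metric_triangle x y z; rewrite /mball /= in xy *; lra.
Qed.

Lemma open_mdist_gt x r : open [set y | r < mdist x y].
Proof.
rewrite openE => y /= xy; apply/nbhs_ballP; exists (mdist x y - r) => /=.
  by rewrite subr_gt0.
move=> z; rewrite ballEmdist /= => yz.
have := metric_triangle x z y; rewrite (metric_sym z y); lra.
Qed.

Lemma msphereE x r : msphere x r = ~` (mball x r `|` [set y | r < mdist x y]).
Proof.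
apply/seteqP; split => y; rewrite /msphere /mball /=.
  by move=> ->; rewrite ltxx; case.
move/not_orP => [/negP + /negP]; rewrite -!leNgt => ? ?.
by apply/eqP; rewrite eq_le; apply/andP.
Qed.

Lemma continuous_within_ge0_mdist (g : R -> M) t e :
  {within `[0, +oo[, continuous g} -> 0 <= t -> 0 < e ->
  exists2 d, 0 < d & forall s, 0 <= s -> `|s - t| <= d -> mdist (g t) (g s) < e.
Proof.
move=> /subspace_continuousP gcont t0 e0.
have t_ge0 : `[0, +oo[%classic t by rewrite /= in_itv /= t0.
have /cvg_ballP/(_ e e0)/nbhs_ballP [d d0 gd] := gcont t t_ge0.
exists (d / 2) => [|s s0 st]; first by rewrite divr_gt0.
have /gd : ball t d s.
  rewrite -ball_normE /= distrC; apply: le_lt_trans st _.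
  by rewrite ltr_pdivrMr // ltr_pMr // ltr1n.
by rewrite ballEmdist /=; apply; rewrite /= in_itv /= s0.
Qed.

End metric_balls.

Section borel_sets.
Context {R : realType} {M : metricType R} (m0 : M).

Lemma open_measurable_borel (A : set M) : open A -> measurable (A : set (borel m0)).
Proof. exact: sub_sigma_algebra. Qed.

Lemma closure_measurable_borel (A : set M) : measurable (closure A : set (borel m0)).
Proof.
rewrite -[closure A]setCK; apply: measurableC; apply: open_measurable_borel.
exact/closed_openC/closed_closure.
Qed.

Lemma msphere_measurable_borel (x : M) r : measurable (msphere x r : set (borel m0)).
Proof.
rewrite msphereE; apply: measurableC; apply: measurableU; apply: open_measurable_borel.
  exact: open_mball.
exact: open_mdist_gt.
Qed.

End borel_sets.

Section continuity_within_ge0.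
Context {R : realType}.

Lemma near_within_ge0 (t : R) (P : R -> Prop) :
  (exists2 d, 0 < d & forall s, 0 <= s -> `|s - t| < d -> P s) ->
  \forall s \near within (`[0, +oo[%classic : set R) (nbhs t), P s.
Proof.
move=> [d d0 dP]; apply/nbhs_ballP; exists d => // s /= ts.
by rewrite in_itv /= andbT => s0; apply: dP; rewrite // -ball_normE /= distrC in ts.
Qed.

Lemma ge0_continuous_within_ge0 (f : R -> \bar R) :
  (forall s, 0 <= f s)%E ->
  (forall t a, 0 <= t -> (a%:E < f t)%E -> exists2 d, 0 < d &
    forall s, 0 <= s -> `|s - t| < d -> (a%:E < f s)%E) ->
  (forall t b, 0 <= t -> (f t < b%:E)%E -> exists2 d, 0 < d &
    forall s, 0 <= s -> `|s - t| < d -> (f s < b%:E)%E) ->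
  {within `[0, +oo[, continuous f}.
Proof.
move=> f_ge0 f_lower f_upper; apply/subspace_continuousP => t /=.
rewrite in_itv /= andbT => t0; rewrite /from_subspace /=.
move: (f_ge0 t) (f_lower t) (f_upper t); case: (f t) => [r| |] // _ lower upper.
  apply/fine_cvgP; split.
    have [|d d0 fd] := upper (r + 1) t0; first by rewrite lte_fin ltrDl.
    apply: near_within_ge0; exists d => // s s0 st.
    by rewrite ge0_fin_numE //; exact: lt_trans (fd s s0 st) (ltry _).
  apply/cvgrPdist_lt => e e0.
  have [|d1 d10 fd1] := lower (r - e) t0; first by rewrite lte_fin gtrBl.
  have [|d2 d20 fd2] := upper (r + e) t0; first by rewrite lte_fin ltrDl.
  apply: near_within_ge0; exists (Num.min d1 d2); first by rewrite lt_min d10 d20.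
  move=> s s0; rewrite lt_min => /andP [s1 s2].
  move: (fd1 s s0 s1) (fd2 s s0 s2); case fs: (f s) => [x| |] //=.
  by rewrite !lte_fin => ? ?; rewrite fs /= ltr_norml; apply/andP; split; lra.
apply/(@cvgeyPgt R _ (within (`[0, +oo[%classic : set R) (nbhs t))) => A.
by apply: near_within_ge0; have [d d0 fd] := lower A t0 (ltry _); exists d.
Qed.

Lemma nondecreasing_continuous_within_ge0 (f : R -> \bar R) :
  (forall s, 0 <= f s)%E -> {homo f : s t / s <= t >-> (s <= t)%E} ->
  (forall t a, 0 < t -> (a%:E < f t)%E -> exists2 h, 0 < h & (a%:E < f (t - h)%R)%E) ->
  (forall t b, 0 <= t -> (f t < b%:E)%E -> exists2 h, 0 < h & (f (t + h)%R < b%:E)%E) ->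
  {within `[0, +oo[, continuous f}.
Proof.
move=> f_ge0 f_nd f_left f_right; apply: ge0_continuous_within_ge0 => // t.
- move=> a; rewrite le_eqVlt => /predU1P [<-|t0] aft.
    by exists 1 => // s s0 _; exact: lt_le_trans aft (f_nd _ _ s0).
  have [h h0 afh] := f_left t a t0 aft; exists h => // s _.
  by rewrite ltr_norml => /andP [st _]; apply: lt_le_trans afh (f_nd _ _ _); lra.
- move=> b t0 ftb; have [h h0 fhb] := f_right t b t0 ftb; exists h => // s _.
  by rewrite ltr_norml => /andP [_ st]; apply: le_lt_trans (f_nd _ _ _) fhb; lra.
Qed.

End continuity_within_ge0.

Section inverse_naturals.
Context {R : realType}.

Lemma exists_divSn_lt (t e : R) : 0 < t -> 0 < e -> exists n : nat, t / n.+1%:R < e.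
Proof.
move=> t0 e0; have [n] := ltr_add_invr (divr_gt0 e0 t0); rewrite add0r => ne.
by exists n; rewrite mulrC -ltr_pdivlMr.
Qed.

Lemma ge0_divSn_nonincreasing (t : R) : 0 <= t ->
  {homo (fun n : nat => t / n.+1%:R) : m n / (m <= n)%N >-> n <= m}.
Proof.
by move=> t0 m n mn; rewrite ler_wpM2l // lef_pV2 ?posrE ?ltr0n // ler_nat.
Qed.

Lemma ge0_divSn_le (t : R) n : 0 <= t -> t / n.+1%:R <= t.
Proof. by move=> t0; rewrite -[leRHS]divr1 (ge0_divSn_nonincreasing t0 (leq0n n)). Qed.

End inverse_naturals.

Section tube.
Context {R : realType} {M : metricType R}.
Variables (g : R -> M) (eps : R).

Definition tube (t : R) : set M := \bigcup_(s in `[0, t]) mball (g s) eps.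

Definition shell (t h : R) : set M :=
  (\bigcup_(s in `[t, t + h]) mball (g s) eps) `\` mball (g t) eps.

Lemma open_tube t : open (tube t).
Proof. by apply: bigcup_open => s _; exact: open_mball. Qed.

Lemma tubeS : {homo tube : s t / s <= t >-> s `<=` t}.
Proof.
move=> s t st y [u /=]; rewrite in_itv /= => /andP [u0 us] yu.
by exists u => //=; rewrite in_itv /= u0 (le_trans us st).
Qed.

Lemma shellS t : {homo shell t : h k / h <= k >-> h `<=` k}.
Proof.
move=> h k hk y [[s /=]]; rewrite in_itv /= => /andP [ts sh] ys nyt.
by split => //; exists s => //=; rewrite in_itv /= ts (le_trans sh) // lerD2l.
Qed.

Lemma tube_subset_shell t h : 0 <= t -> tube (t + h) `<=` tube t `|` shell t h.
Proof.
move=> t0 y [s /=]; rewrite in_itv /= => /andP [s0 sth] ys.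
have [st|ts] := leP s t; first by left; exists s => //=; rewrite in_itv /= s0.
have [yt|nyt] := pselect (mball (g t) eps y).
  by left; exists t => //; rewrite /= in_itv /= t0 lexx.
by right; split => //; exists s => //=; rewrite in_itv /= sth (ltW ts).
Qed.

Lemma shell_subset_mball t d : 0 <= t ->
  (forall s, 0 <= s -> `|s - t| <= d -> mdist (g t) (g s) < eps) ->
  shell t d `<=` mball (g t) (eps + eps).
Proof.
move=> t0 gd y [[s /=]]; rewrite in_itv /= => /andP [ts sd] ys _.
have : mdist (g t) (g s) < eps.
  by apply: gd; [exact: le_trans ts | rewrite ger0_norm ?subr_ge0 // lerBlDl].
have := metric_triangle (g t) (g s) y; rewrite /mball /= in ys *; lra.
Qed.

Hypothesis gcont : {within `[0, +oo[, continuous g}.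

Lemma bigcup_tube_lt t : 0 < t -> \bigcup_n tube (t - t / n.+1%:R) = tube t.
Proof.
move=> t0; apply/seteqP; split => y.
  by move=> [n _]; apply: tubeS; rewrite gerBl divr_ge0 // ltW.
move=> [s /=]; rewrite in_itv /= => /andP [s0]; rewrite le_eqVlt => /predU1P [->|st] ys.
  have : 0 < eps - mdist (g t) y by rewrite subr_gt0.
  move=> /(continuous_within_ge0_mdist gcont (ltW t0)) [d d0 gd].
  have [n tn] := exists_divSn_lt t0 d0; exists n => //.
  have tn_le : t / n.+1%:R <= t by exact: ge0_divSn_le (ltW t0).
  exists (t - t / n.+1%:R); first by rewrite /= in_itv /= subr_ge0 tn_le /=.
  have : mdist (g t) (g (t - t / n.+1%:R)) < eps - mdist (g t) y.
    apply: gd; first by rewrite subr_ge0.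
    by rewrite addrAC subrr add0r normrN ger0_norm ?divr_ge0 ?ltW.
  have := metric_triangle (g (t - t / n.+1%:R)) (g t) y.
  by rewrite [mdist _ (g t)]metric_sym /mball /= in ys *; set q := t / _; lra.
have [n tn] : exists n : nat, t / n.+1%:R < t - s.
  by apply: exists_divSn_lt; rewrite ?subr_gt0.
exists n => //; exists s => //=; rewrite in_itv /= s0 /=; set q := t / _ in tn *; lra.
Qed.

Lemma bigcap_shell_subset_msphere t d : 0 <= t -> 0 < d ->
  \bigcap_n shell t (d / n.+1%:R) `<=` msphere (g t) eps.
Proof.
move=> t0 d0 y y_shells; have [_ /negP] := y_shells 0%N I; rewrite -leNgt => eps_le.
apply/eqP; rewrite eq_le eps_le andbT leNgt; apply/negP => far.
have : 0 < mdist (g t) y - eps by rewrite subr_gt0.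
move=> /(continuous_within_ge0_mdist gcont t0) [d' d'0 gd'].
have [n dn] := exists_divSn_lt d0 d'0.
have [[s /=]] := y_shells n I; rewrite in_itv /= => /andP [ts sn] ys _.
have : mdist (g t) (g s) < mdist (g t) y - eps.
  apply: gd' (le_trans t0 ts) _; rewrite ger0_norm ?subr_ge0 //.
  by rewrite lerBlDl; apply: le_trans sn _; rewrite lerD2l ltW.
have := metric_triangle (g t) (g s) y; rewrite /mball /= in ys; lra.
Qed.

End tube.

Section tube_measure.
Context {R : realType} {M : metricType R} (m0 : M).
Variables (mu : {measure set (borel m0) -> \bar R}) (g : R -> M) (eps : R).

Lemma tube_measurable t : measurable (tube g eps t : set (borel m0)).
Proof. by apply: open_measurable_borel; exact: open_tube. Qed.

Lemma shell_measurable t h : measurable (shell g eps t h : set (borel m0)).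
Proof.
apply: measurableD; apply: open_measurable_borel; last exact: open_mball.
by apply: bigcup_open => s _; exact: open_mball.
Qed.

Lemma le_mu_tube : {homo (fun t => mu (tube g eps t)) : s t / s <= t >-> (s <= t)%E}.
Proof.
move=> s t st; apply: le_measure; rewrite ?inE.
- exact: tube_measurable.
- exact: tube_measurable.
- exact: tubeS.
Qed.

Hypothesis gcont : {within `[0, +oo[, continuous g}.

Lemma mu_tube_left t a : 0 < t -> (a%:E < mu (tube g eps t))%E ->
  exists2 h, 0 < h & (a%:E < mu (tube g eps (t - h)))%E.
Proof.
move=> t0 a_lt; pose F n := tube g eps (t - t / n.+1%:R).
have F_meas n : measurable (F n : set (borel m0)) by exact: tube_measurable.
have F_nd : nondecreasing_seq F.
  move=> m n mn; apply/subsetPset/tubeS.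
  by rewrite lerD2l lerN2 ge0_divSn_nonincreasing // ltW.
have := nondecreasing_cvg_mu (mu := mu) F_meas (bigcupT_measurable _ F_meas) F_nd.
rewrite bigcup_tube_lt // => /(_ _ (open_ereal_gt' a_lt)).
move=> [n _ /(_ n (leqnn n)) /= a_lt_n].
by exists (t / n.+1%:R); first by rewrite divr_gt0.
Qed.

Hypothesis eps_gt0 : 0 < eps.
Hypothesis mu_mball_fin : forall (x : M) (r : R), (mu (mball x r) < +oo)%E.
Hypothesis mu_msphere0 : forall x : M, mu (msphere x eps) = 0%E.

Lemma mu_shell_lt t e : 0 <= t -> 0 < e ->
  exists2 h, 0 < h & (mu (shell g eps t h) < e%:E)%E.
Proof.
move=> t0 e0; have [d d0 gd] := continuous_within_ge0_mdist gcont t0 eps_gt0.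
pose E n := shell g eps t (d / n.+1%:R).
have E_meas n : measurable (E n : set (borel m0)) by exact: shell_measurable.
have E_ni : nonincreasing_seq E.
  move=> m n mn; apply/subsetPset/shellS.
  exact: ge0_divSn_nonincreasing (ltW d0) _ _ mn.
have E0_fin : (mu (E 0%N) < +oo)%E.
  apply: le_lt_trans (mu_mball_fin (g t) (eps + eps)).
  apply: le_measure; rewrite ?inE //.
    by apply: open_measurable_borel; exact: open_mball.
  apply: shell_subset_mball => // s s0 st; apply: gd => //.
  by apply: le_trans st _; exact: ge0_divSn_le (ltW d0).
have mu_bigcapE : mu (\bigcap_n E n) = 0%E.
  apply/eqP; rewrite eq_le measure_ge0 andbT -(mu_msphere0 (g t)).
  apply: le_measure; rewrite ?inE; first exact: bigcapT_measurable.
    exact: msphere_measurable_borel.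
  exact: bigcap_shell_subset_msphere.
have := nonincreasing_cvg_mu E0_fin E_meas (bigcapT_measurable E_meas) E_ni.
rewrite mu_bigcapE => /(_ _ (@open_ereal_lt' _ 0%E e%:E _)).
rewrite lte_fin => /(_ e0) [n _ /(_ n (leqnn n)) /= En_lt].
by exists (d / n.+1%:R); first by rewrite divr_gt0.
Qed.

Lemma mu_tube_right t b : 0 <= t -> (mu (tube g eps t) < b%:E)%E ->
  exists2 h, 0 < h & (mu (tube g eps (t + h)) < b%:E)%E.
Proof.
move=> t0 tube_lt.
have tube_fin : mu (tube g eps t) \is a fin_num.
  by rewrite ge0_fin_numE // (lt_trans tube_lt (ltry _)).
have [|h h0 shell_lt] := mu_shell_lt t0 (_ : 0 < b - fine (mu (tube g eps t))).
  by rewrite subr_gt0 -lte_fin fineK.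
exists h => //.
apply: (le_lt_trans (le_measure mu _ _ (tube_subset_shell (h := h) t0))).
- by rewrite inE; exact: tube_measurable.
- by rewrite inE; apply: measurableU; [exact: tube_measurable|exact: shell_measurable].
apply: (le_lt_trans (measureU2 mu _ _)).
- exact: tube_measurable.
- exact: shell_measurable.
rewrite -lteBrDl; last exact: tube_fin.
by apply: (lt_le_trans shell_lt); rewrite EFinB fineK.
Qed.

Lemma continuous_mu_tube : {within `[0, +oo[, continuous (fun t => mu (tube g eps t))}.
Proof.
apply: nondecreasing_continuous_within_ge0 => //.
- exact: le_mu_tube.
- exact: mu_tube_left.
- exact: mu_tube_right.
Qed.

End tube_measure.

Unset Implicit Arguments.

Theorem lemma2p3 (R : realType) (M : metricType R) (m0 : M)
  (mu : {measure set (borel m0) -> \bar R})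
  (dO : measure_display) (Omega : measurableType dO)
  (P : M -> probability Omega R) (X : R -> Omega -> M)
  (* standing assumptions on the metric space *)
  (Mnoncompact : ~ compact [set: M])
  (Mconnected : connected [set: M])
  (Mcomplete : complete_metric M)
  (Mseparable : separable_space M)
  (balls_rc : forall (x : M) (r : R), relatively_compact (mball x r))
  (* standing assumptions on the measure *)
  (mu_pos : forall U : set M, open U -> relatively_compact U -> U !=set0 ->
     (0 < mu U)%E)
  (mu_fin : forall U : set M, open U -> relatively_compact U ->
     (mu (closure U) < +oo)%E)
  (sphere_ne : forall (x : M) (r : R), 0 <= r -> msphere x r !=set0)
  (sphere_null : forall (x : M) (r : R), 0 <= r -> mu (msphere x r) = 0%E)
  (* the process: measurable, started at x under P x, continuous paths *)
  (X_meas : forall t : R, 0 <= t ->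
     measurable_fun [set: Omega] (X t : Omega -> borel m0))
  (X_start : forall x : M, P x [set w | X 0 w = x] = 1%E)
  (X_cont : forall y : M,
     {ae P y, forall w : Omega, {within `[0, +oo[, continuous (fun t => X t w)}})
  (eps : R) (eps_gt0 : 0 < eps) (x : M) :
  {ae P x, forall w : Omega, {within `[0, +oo[, continuous (Veps mu X eps w)}}.
Proof.
have mu_mball_fin (y : M) r : (mu (mball y r) < +oo)%E.
  apply: le_lt_trans (mu_fin _ (open_mball y r) (balls_rc y r)).
  apply: le_measure; rewrite ?inE; last exact: subset_closure.
    by apply: open_measurable_borel; exact: open_mball.
  exact: closure_measurable_borel.
have mu_msphere0 y : mu (msphere y eps) = 0%E by exact: sphere_null (ltW eps_gt0).
apply: filterS (X_cont x) => w Xw_cont.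
exact: continuous_mu_tube Xw_cont eps_gt0 mu_mball_fin mu_msphere0.
Qed.
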